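(* For every positive integer $n$ there exists a bijection $\phi:\mathcal{H}_n\to\mathcal{H}_n$ such that $\mathrm{rep}(\lambda)=\mathrm{even}(\phi(\lambda))$ for every $\lambda\in\mathcal{H}_n$.
   Context: A partition is a finite nonempty weakly decreasing sequence $\lambda=(\lambda_1,\ldots,\lambda_k)$ of positive integers; $\ell(\lambda)=k$. The perimeter is $\Gamma(\lambda)=\lambda_1+\ell(\lambda)-1$; $\mathcal{H}_n$ is the set of partitions with perimeter $n$. $\mathrm{rep}(\lambda)=|\{1\le i\le \ell(\lambda)-1:\lambda_i=\lambda_{i+1}\}|$ and $\mathrm{even}(\lambda)=|\{1\le i\le\ell(\lambda):\lambda_i\text{ even}\}|$. *)

From mathcomp Require Import all_boot.
Set Implicit Arguments. Unset Strict Implicit. Unset Printing Implicit Defensive.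

Definition is_partition (l : seq nat) : bool :=
  [&& l != [::], sorted geq l & all (fun x => 0 < x) l].

Definition perimeter (l : seq nat) : nat := head 0 l + size l - 1.

Definition in_Hn (n : nat) (l : seq nat) : bool :=
  is_partition l && (perimeter l == n).

Definition Hn (n : nat) := {l : seq nat | in_Hn n l}.

Definition rep (l : seq nat) : nat :=
  count (fun i => nth 0 l i == nth 0 l i.+1) (iota 0 (size l).-1).

Definition even_parts (l : seq nat) : nat := count (fun x => ~~ odd x) l.

From mathcomp Require Import all_boot zify.

Set Implicit Arguments.
Unset Strict Implicit.
Unset Printing Implicit Defensive.

(* Encode a partition of perimeter n by a bit word s_1 ... s_(n-1): starting
   from (1) and reading s from right to left, a bit true adds a cell to the
   first part and a bit false duplicates it.  The part created by a false bit
   s_i (the first part for i = 0) is then 1 + #{j > i | s_j}.  So two parts are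
   equal exactly for adjacent false bits of false :: s, and rep counts these
   pairs; a part of the partition coded by t is even iff an odd number of true
   bits of t lie to its right.  Take phi to be conjugation by the invertible
   word map t_i = s_i xor s_(i+1), with s_n := true.  The number of true bits
   of t to the right of i telescopes to s_(i+1) xor true, so the part created
   by a false bit t_i (i.e. s_i = s_(i+1)) is even iff s_(i+1) is false, and
   even parts of phi(lambda) match the adjacent false pairs of false :: s. *)

Definition extend (b : bool) (l : seq nat) : seq nat :=
  if b then (head 0 l).+1 :: behead l else head 0 l :: l.

Definition part_of_bits (s : seq bool) : seq nat := foldr extend [:: 1] s.

Lemma part_of_bits_cons s :
  part_of_bits s = head 0 (part_of_bits s) :: behead (part_of_bits s).
Proof. by case: s => [|[] s]. Qed.

Lemma head_part_of_bits s : head 0 (part_of_bits s) = (count id s).+1.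
Proof. by elim: s => [|[] s IH] //=; rewrite IH. Qed.

Lemma size_part_of_bits s : size (part_of_bits s) = (count (predC id) s).+1.
Proof.
elim: s => [|[] s IH] //=; last by rewrite IH.
by rewrite (part_of_bits_cons s) /= in IH *.
Qed.

Lemma perimeter_part_of_bits s : perimeter (part_of_bits s) = (size s).+1.
Proof.
rewrite /perimeter head_part_of_bits size_part_of_bits.
by rewrite -(count_predC id s); lia.
Qed.

Lemma is_partition_extend b l : is_partition l -> is_partition (extend b l).
Proof.
case: l => [|x r] //; rewrite /is_partition /= => /and3P[srt x0 pos].
case: b => /=; rewrite ?pos ?x0 ?andbT; last by rewrite leqnn.
by case: r srt {pos} => //= y r /andP[yx ->]; rewrite (leq_trans yx).
Qed.

Lemma is_partition_part_of_bits s : is_partition (part_of_bits s).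
Proof. by elim: s => [|b s IH] //=; apply: is_partition_extend. Qed.

Lemma extend_inj b l l' :
  l != [::] -> l' != [::] -> extend b l = extend b l' -> l = l'.
Proof.
case: l l' => [|x r] [|x' r'] // _ _.
by case: b => /=; [case=> -> -> | case=> -> _ ->].
Qed.

Lemma extend_true_false l l' : sorted geq l -> extend true l <> extend false l'.
Proof.
case: l => [|x r] /=; first by case: l'.
move=> srt [eq_x eq_r]; subst l'; move: srt eq_x.
by case: r => [|y r] //= /andP[yx _] eq_y; rewrite -eq_y ltnn in yx.
Qed.

Lemma part_of_bits_inj : injective part_of_bits.
Proof.
have srt t : sorted geq (part_of_bits t).
  by case/and3P: (is_partition_part_of_bits t).
elim=> [|b s IH] [|b' s'] eq_ps //.
1,2: by move: (congr1 perimeter eq_ps); rewrite !perimeter_part_of_bits.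
have eq_b : b = b'.
  case: b b' eq_ps => [] [] // eq_ps.
    by case: (extend_true_false (srt s) eq_ps).
  by case: (extend_true_false (srt s') (esym eq_ps)).
have nonnil t : part_of_bits t != [::] by rewrite part_of_bits_cons.
by subst b'; rewrite (IH s') // (extend_inj (nonnil s) (nonnil s') eq_ps).
Qed.

Lemma is_partition_cons2 x y r :
  is_partition [:: x, y & r] = (y <= x) && is_partition (y :: r).
Proof.
rewrite /is_partition /=; case: (leqP y x) => //= yx.
by case: (posnP y) => [->|/leq_trans/(_ yx) ->]; rewrite ?andbF.
Qed.

Lemma part_of_bits_onto l : is_partition l -> exists s, part_of_bits s = l.
Proof.
have [N] := ubnP (head 0 l + size l).
elim: N l => // N IH [|x [|y r]] //= ltN.
  rewrite /is_partition /= andbT; case: x ltN => [|[|x]] // ltN _.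
    by exists [::].
  have [s ps] : exists s, part_of_bits s = [:: x.+1] by apply: IH => //=; lia.
  by exists (true :: s); rewrite /= ps.
rewrite is_partition_cons2 => /andP[yx ptn].
case: (eqVneq x y) => [eq_xy|neq_xy].
  subst x; have [s ps] : exists s, part_of_bits s = y :: r.
    by apply: IH => //=; lia.
  by exists (false :: s); rewrite /= ps.
case: x yx neq_xy ltN => [|x] yx neq_xy ltN.
  by case: y yx neq_xy {ltN ptn}.
have [s ps] : exists s, part_of_bits s = [:: x, y & r].
  by apply: IH; rewrite ?is_partition_cons2 ?ptn ?andbT //=; lia.
by exists (true :: s); rewrite /= ps.
Qed.

Fixpoint xor_next (s : seq bool) : seq bool :=
  if s is b :: s' then (b != head true s') :: xor_next s' else [::].

Definition xor_suffix : seq bool -> seq bool :=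
  foldr (fun c t => (c != head true t) :: t) [::].

Lemma xor_nextK : cancel xor_next xor_suffix.
Proof. by elim=> [|b s /= ->] //; case: b; case: (head true s). Qed.

Lemma xor_suffixK : cancel xor_suffix xor_next.
Proof.
elim=> [|c t /= ->] //=; congr (_ :: _).
by case: c; case: (head true (xor_suffix t)).
Qed.

Lemma size_xor_next s : size (xor_next s) = size s.
Proof. by elim: s => [|b s /= ->]. Qed.

Lemma size_xor_suffix s : size (xor_suffix s) = size s.
Proof. by elim: s => [|c t /= ->]. Qed.

Lemma odd_count_xor_next s : odd (count id (xor_next s)) = ~~ head true s.
Proof.
by elim: s => [|b s IH] //=; rewrite oddD IH; case: b; case: (head true s).
Qed.

Lemma rep_cons2 x y r : rep [:: x, y & r] = (x == y) + rep (y :: r).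
Proof. by rewrite /rep /= -(addn0 1) iotaDl count_map. Qed.

Lemma rep_part_of_bits_false s :
  rep (part_of_bits (false :: s)) = (rep (part_of_bits s)).+1.
Proof. by rewrite /= (part_of_bits_cons s) /= rep_cons2 eqxx. Qed.

Lemma rep_part_of_bits_true s :
  rep (part_of_bits (true :: s)) = rep (part_of_bits s) - ~~ head true s.
Proof.
case: s => [|b s] //; have /and3P[_ srt _] := is_partition_part_of_bits s.
rewrite /= (part_of_bits_cons s) /= in srt *.
case: b => /=.
  case: (behead _) srt => [|y r] //= /andP[yh _]; set h := head 0 _ in yh *.
  rewrite !rep_cons2 (gtn_eqF (leqW yh : y < h.+2)).
  by rewrite (gtn_eqF (yh : y < h.+1)) subn0.
by rewrite !rep_cons2 eqxx gtn_eqF //= add1n subn1.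
Qed.

Lemma rep_part_of_bits_xor_next s :
  rep (part_of_bits s) = even_parts (part_of_bits (xor_next s)).
Proof.
elim: s => [|b s IH] //.
have parity : odd (head 0 (part_of_bits (xor_next s))) = head true s.
  by rewrite head_part_of_bits /= odd_count_xor_next negbK.
case: b; rewrite ?rep_part_of_bits_true ?rep_part_of_bits_false /=;
  move: IH parity; rewrite /even_parts /extend /=;
  case: (part_of_bits _) (part_of_bits_cons (xor_next s)) => // h r _;
  by case: (head true s) => /= -> par; rewrite ?oddS par /=; lia.
Qed.

Lemma part_of_bits_in_Hn s : in_Hn (size s).+1 (part_of_bits s).
Proof.
by rewrite /in_Hn is_partition_part_of_bits perimeter_part_of_bits eqxx.
Qed.

Section BitsOfHn.

Variable n : nat.

Lemma exists_bits_of (lam : Hn n) : exists s, part_of_bits s == val lam.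
Proof.
have [s <-] := part_of_bits_onto (proj1 (andP (valP lam))).
by exists s.
Qed.

Definition bits_of (lam : Hn n) : seq bool := xchoose (exists_bits_of lam).

Lemma bits_ofK lam : part_of_bits (bits_of lam) = val lam.
Proof. exact/eqP/(xchooseP (exists_bits_of lam)). Qed.

Lemma size_bits_of lam : (size (bits_of lam)).+1 = n.
Proof.
have /andP[_ /eqP <-] := valP lam.
by rewrite -bits_ofK perimeter_part_of_bits.
Qed.

Section Conjugation.

Variable f : seq bool -> seq bool.
Hypothesis size_f : forall s, size (f s) = size s.

Lemma conj_bits_in_Hn lam : in_Hn n (part_of_bits (f (bits_of lam))).
Proof. by rewrite -(size_bits_of lam) -size_f part_of_bits_in_Hn. Qed.

Definition conj_bits (lam : Hn n) : Hn n :=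
  exist (in_Hn n) _ (conj_bits_in_Hn lam).

Lemma bits_of_conj lam : bits_of (conj_bits lam) = f (bits_of lam).
Proof. by apply: part_of_bits_inj; rewrite bits_ofK. Qed.

End Conjugation.

Lemma conj_bits_can f g (size_f : forall s, size (f s) = size s)
    (size_g : forall s, size (g s) = size s) :
  cancel f g -> cancel (conj_bits size_f) (conj_bits size_g).
Proof.
by move=> fK lam; apply: val_inj; rewrite /= bits_of_conj fK bits_ofK.
Qed.

End BitsOfHn.

Theorem theorem2p7 (n : nat) (hn : 0 < n) :
  exists phi : Hn n -> Hn n,
    bijective phi /\ forall lam : Hn n, rep (val lam) = even_parts (val (phi lam)).
Proof.
exists (conj_bits size_xor_next); split.
  exact: Bijective (conj_bits_can size_xor_next size_xor_suffix xor_nextK)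
                   (conj_bits_can size_xor_suffix size_xor_next xor_suffixK).
by move=> lam; rewrite -(bits_ofK lam) rep_part_of_bits_xor_next.
Qed.
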